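(* Let $G$ be a connected simple graph without bridges whose edge set is identified with $[d+1]$, let $B_1,\dots,B_n$ be the bases (spanning trees) of its graphic matroid, all of cardinality $k$, and let $P=\operatorname{tconv}(V)$ with $V=(-e_{B_1},\dots,-e_{B_n})$. Then: (1) the set of pseudovertices of $P$ is $\{-e_J: J=\bigcup_{i\in I}B_i \text{ for some } I\subseteq[n]\}$; (2) the set of pseudovertices of the tropical standard simplex $\Delta^d=\operatorname{tconv}\{-e_1,\dots,-e_{d+1}\}$ is $\{-e_J: J\subseteq[d+1],\ 1\le|J|\le d\}$; (3) let $(T^{(0)}_1,\dots,T^{(0)}_{d+1})=\operatorname{type}_V(\mathbf{0})$, and let $-e_J$ be a pseudovertex of $P$ with $[d+1]\setminus J=\{i_1,\dots,i_r\}$; then $\operatorname{type}_V(-e_J)=(T_1,\dots,T_{d+1})$ where $$T_j=\begin{cases}T^{(0)}_j\setminus\big(T^{(0)}_{i_1}\cup\cdots\cup T^{(0)}_{i_r}\big) & \text{if } j\in J,\\ T^{(0)}_j\cup\big((T^{(0)}_{i_1})^C\cap\cdots\cap(T^{(0)}_{i_r})^C\big) & \text{otherwise,}\end{cases}$$ with complements taken in $[n]$.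
   Context: Tropical arithmetic is min-plus; $\mathbb{T}^d=\mathbb{R}^{d+1}/\mathbb{R}(1,\dots,1)$; $\operatorname{tconv}\{v_1,\dots,v_n\}=\{\bigoplus_l\lambda_l\odot v_l:\lambda_l\in\mathbb{R}\}$; $e_J=\sum_{i\in J}e_i$, and $\mathbf{0}$ is the origin. For $m\in[d+1]$ let $\bar S_m=\{\xi\in\mathbb{T}^d:\xi_m=\min_i\xi_i\}$. For generators $V=(v_1,\dots,v_n)$ and $x\in\mathbb{T}^d$, $\operatorname{type}_V(x)=(T_1,\dots,T_{d+1})$ with $T_m=\{l\in[n]:v_l\in x+\bar S_m\}$. The cells $\{x:\operatorname{type}_V(x)=\mathcal{T}\}$ have closures forming a polyhedral subdivision $\mathcal{C}_V$ of $\mathbb{T}^d$ (the tropical complex); the pseudovertices of the tropical polytope $\operatorname{tconv}(V)$ are the zero-dimensional cells of $\mathcal{C}_V$. *)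

From HB Require Import structures.
From mathcomp Require Import all_boot all_order all_algebra.
From mathcomp Require Import reals.
Set Implicit Arguments. Unset Strict Implicit. Unset Printing Implicit Defensive.
Import Order.TTheory GRing.Theory Num.Theory.
Local Open Scope ring_scope.

Section Tropical.
Variable R : realType.
Variables (d n : nat).

(* Points of T^d are represented by vectors of R^(d+1); [tequiv] is equality
   modulo R(1,...,1). *)
Definition tequiv (x y : 'rV[R]_(d.+1)) : Prop :=
  exists c : R, forall i, x 0 i = y 0 i + c.

Definition eJ (J : {set 'I_(d.+1)}) : 'rV[R]_(d.+1) :=
  \row_(i < d.+1) (if i \in J then 1 else 0).

Definition tconv (V : 'I_n -> 'rV[R]_(d.+1)) (x : 'rV[R]_(d.+1)) : Prop :=
  exists lam : 'I_n -> R, forall i,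
    (forall l, x 0 i <= lam l + V l 0 i) /\ (exists l, x 0 i = lam l + V l 0 i).

(* type_V(x) = (T_1,...,T_{d+1}),  T_m = {l : v_l in x + S_m},
   S_m = {xi : xi_m = min_i xi_i} *)
Definition ttype (V : 'I_n -> 'rV[R]_(d.+1)) (x : 'rV[R]_(d.+1))
  : {ffun 'I_(d.+1) -> {set 'I_n}} :=
  [ffun m => [set l | [forall i, V l 0 m - x 0 m <= V l 0 i - x 0 i]]].

(* pseudovertices of tconv(V) = zero-dimensional cells of the tropical complex:
   points x whose cell {y : type_V(y) = type_V(x)} is a single point of T^d *)
Definition pseudovertex (V : 'I_n -> 'rV[R]_(d.+1)) (x : 'rV[R]_(d.+1)) : Prop :=
  forall y, ttype V y = ttype V x -> tequiv y x.

End Tropical.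

Section Graphs.
Variables (Vt : finType) (d : nat) (src tgt : 'I_(d.+1) -> Vt).

Definition adj (F : {set 'I_(d.+1)}) : rel Vt :=
  fun u v => [exists e in F,
    ((src e == u) && (tgt e == v)) || ((src e == v) && (tgt e == u))].

Definition simple_graph : Prop :=
  (forall e, src e != tgt e) /\
  (forall e e', ((src e == src e') && (tgt e == tgt e'))
                || ((src e == tgt e') && (tgt e == src e')) -> e = e').

Definition spanning_connected (F : {set 'I_(d.+1)}) : Prop :=
  forall u v, connect (adj F) u v.

Definition connected_graph : Prop := spanning_connected setT.

Definition bridgeless : Prop := forall e, spanning_connected [set~ e].

Definition acyclic (F : {set 'I_(d.+1)}) : Prop :=
  forall e, e \in F -> ~~ connect (adj (F :\ e)) (src e) (tgt e).

(* bases of the graphic matroid of a connected graph = spanning trees *)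
Definition spanning_tree (F : {set 'I_(d.+1)}) : Prop :=
  spanning_connected F /\ acyclic F.

End Graphs.

From HB Require Import structures.
From mathcomp Require Import all_boot all_order all_algebra.
From mathcomp Require Import reals.
From mathcomp Require Import lra.
Set Implicit Arguments. Unset Strict Implicit. Unset Printing Implicit Defensive.
Import Order.TTheory GRing.Theory Num.Theory.

(* A point x is a pseudovertex iff the graph on coordinates that joins i and m
   whenever some generator v_l attains min_k (v_l - x)_k at both i and m is
   connected: otherwise raising x slightly on one component keeps its type.
   For 0/-1 generators -e_B, connectivity pins the coordinates of x to two
   consecutive values, so x = -e_J up to a constant shift, and each coordinate of J is
   witnessed by a generator whose support lies inside J. Conversely, if J is a
   union of supports and misses some coordinate j0, every coordinate is adjacent
   to j0. The extreme cases J = empty and J = all edges are connected because any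
   two edges lie in a common spanning tree. *)

Section SpanningTrees.
Variables (Vt : finType) (d : nat) (src tgt : 'I_(d.+1) -> Vt).
Local Notation adj := (adj src tgt).
Local Notation acyclic := (acyclic src tgt).
Local Notation spanning_tree := (spanning_tree src tgt).
Implicit Types F G S : {set 'I_(d.+1)}.

Lemma adj_sym F : symmetric (adj F).
Proof. by move=> u v; apply: eq_existsb => e; rewrite orbC. Qed.

Lemma connect_adj_sym F : connect_sym (adj F).
Proof. exact/sym_connect_sym/adj_sym. Qed.

Lemma adjP F u v : reflect (exists2 e, e \in F &
    (src e = u /\ tgt e = v) \/ (src e = v /\ tgt e = u)) (adj F u v).
Proof.
apply: (iffP existsP) => [[e /andP[eF]]|[e eF]].
  by case/orP => /andP[/eqP <- /eqP <-]; exists e; auto.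
by case=> -[<- <-]; exists e; rewrite eF !eqxx ?orbT.
Qed.

Lemma adj_edge F e : e \in F -> adj F (src e) (tgt e).
Proof. by move=> eF; apply/adjP; exists e; auto. Qed.

Lemma connect_adj_subset F G : F \subset G ->
  subrel (connect (adj F)) (connect (adj G)).
Proof.
move=> FG; apply: connect_sub => u v /adjP[e eF uv]; apply: connect1.
by apply/adjP; exists e; first exact: subsetP eF.
Qed.

Lemma connect_adj0 u v : connect (adj set0) u v = (u == v).
Proof.
apply/idP/eqP=> [|->]; last exact: connect0.
by case/connectP => -[_ ->|w p /= /andP[/adjP[e]]]; rewrite ?inE.
Qed.

Lemma connect_adj_setU1 g F x y : connect (adj (g |: F)) x y ->
  ~~ connect (adj F) x y -> connect (adj F) x (src g) || connect (adj F) x (tgt g).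
Proof.
move=> xy; apply: contraR => /norP[xs xt].
have Kcl : closed (adj (g |: F)) (connect (adj F) x).
  apply: intro_closed; first exact: connect_adj_sym.
  move=> a b /adjP[e]; rewrite !inE => /orP[/eqP->|eF] ab xa.
    by case: ab xa => [[<- _]|[_ <-]]; rewrite ?(negbTE xs) ?(negbTE xt).
  by apply: connect_trans xa (connect1 _); apply/adjP; exists e.
by have := closed_connect Kcl xy; rewrite !inE connect0 => <-.
Qed.

Lemma acyclic_setU1 F g : acyclic F -> ~~ connect (adj F) (src g) (tgt g) ->
  acyclic (g |: F).
Proof.
move=> aF ng; have gF : g \notin F by apply: contraNN ng => /adj_edge/connect1.
move=> e; rewrite in_setU1 => /orP[/eqP->|eF]; first by rewrite setU1K.
have eg : e != g by apply: contraNneq gF => <-.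
have -> : (g |: F) :\ e = g |: (F :\ e).
  by apply/setP => h; rewrite !inE; case: eqVneq => // ->; rewrite (negbTE eg).
apply/negP => se_te; have ne := aF e eF.
have /orP Hs := connect_adj_setU1 se_te ne.
have /orP Ht : connect (adj (F :\ e)) (tgt e) (src g)
              || connect (adj (F :\ e)) (tgt e) (tgt g).
  by apply: (connect_adj_setU1 (y := src e)); rewrite connect_adj_sym.
have sub := connect_adj_subset (subD1set F e).
have ee : connect (adj F) (src e) (tgt e) by apply/connect1/adj_edge.
case: Hs Ht => Hs [] Ht.
- by case/negP: ne; apply: connect_trans Hs _; rewrite connect_adj_sym.
- case/negP: ng; rewrite connect_adj_sym in Hs.
  exact: connect_trans (sub _ _ Hs) (connect_trans ee (sub _ _ Ht)).
- case/negP: ng; rewrite connect_adj_sym in Hs; rewrite connect_adj_sym.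
  exact: connect_trans (sub _ _ Hs) (connect_trans ee (sub _ _ Ht)).
- by case/negP: ne; apply: connect_trans Hs _; rewrite connect_adj_sym.
Qed.

(* A maximal acyclic superset of [S] is spanning: an edge joining two of its
   components could be added to it. *)
Lemma acyclic_extend S : connected_graph src tgt -> acyclic S ->
  exists F, S \subset F /\ spanning_tree F.
Proof.
move=> cG aS.
have acyclicP F : reflect (acyclic F)
    [forall (e | e \in F), ~~ connect (adj (F :\ e)) (src e) (tgt e)].
  exact: forall_inP.
pose P F := (S \subset F) && [forall (e | e \in F), ~~ connect (adj (F :\ e)) (src e) (tgt e)].
have PS : P S by rewrite /P subxx; apply/acyclicP.
case: (arg_maxnP (fun F => #|F|) PS) => F /andP[SF /acyclicP aF] Fmax.
have Fsat g : connect (adj F) (src g) (tgt g).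
  apply: contraT => ng; have gF : g \notin F by apply: contraNN ng => /adj_edge/connect1.
  have /Fmax : P (g |: F).
    by rewrite /P (subset_trans SF (subsetUr _ _)); apply/acyclicP/acyclic_setU1.
  by rewrite cardsU1 gF => /=; rewrite add1n ltnn.
exists F; split => //; split => // u v.
apply: connect_sub (cG u v) => a b /adjP[g _ [[<- <-]|[<- <-]]] //.
by rewrite connect_adj_sym.
Qed.

Hypothesis simpleG : simple_graph src tgt.

Lemma acyclic_pair e f : acyclic [set e; f].
Proof.
have [loopless edge_uniq] := simpleG.
have not_loop h : ~~ connect (adj set0) (src h) (tgt h) by rewrite connect_adj0.
have a1 : acyclic [set f].
  by rewrite -[[set f]]setU0; apply: acyclic_setU1 (not_loop f) => h; rewrite inE.
have [->|ef] := eqVneq e f; first by rewrite setUid.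
apply: acyclic_setU1 a1 _; apply/negP; rewrite -[[set f]]setU0 => se_te.
have /orP Hs := connect_adj_setU1 se_te (not_loop e).
have /orP Ht : connect (adj set0) (tgt e) (src f) || connect (adj set0) (tgt e) (tgt f).
  by apply: (connect_adj_setU1 (y := src e)); rewrite connect_adj_sym.
rewrite !connect_adj0 in Hs Ht; case/negP: ef; apply/eqP/edge_uniq.
have := loopless e.
by case: Hs Ht => /eqP-> [] /eqP->; rewrite !eqxx ?orbT.
Qed.

Lemma spanning_tree_pair e f : connected_graph src tgt ->
  exists F, [/\ e \in F, f \in F & spanning_tree F].
Proof.
move=> cG; have [F [efF TF]] := acyclic_extend cG (@acyclic_pair e f).
by exists F; split => //; apply: (subsetP efF); rewrite !inE eqxx ?orbT.
Qed.

Lemma spanning_tree_neq0 F : spanning_tree F -> F != set0.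
Proof.
move=> [cF _]; apply: contraTneq (cF (src ord0) (tgt ord0)) => ->.
by rewrite connect_adj0 simpleG.1.
Qed.

End SpanningTrees.

Lemma bridgeless_gt0 (Vt : finType) (d : nat) (src tgt : 'I_(d.+1) -> Vt) :
  simple_graph src tgt -> bridgeless src tgt -> (0 < d)%N.
Proof.
case: d src tgt => // src tgt [loopless _] /(_ ord0 (src ord0) (tgt ord0)).
have -> : [set~ ord0] = set0 :> {set 'I_1} by apply/setP => i; rewrite !inE ord1.
by rewrite connect_adj0 (negbTE (loopless _)).
Qed.

Local Open Scope ring_scope.

Lemma exists_pos_lt_pos (R : realFieldType) (T : finType) (f : T -> R) :
  exists2 eps : R, 0 < eps & forall t, 0 < f t -> eps < f t.
Proof.
suff [eps eps0 Heps] : exists2 eps : R, 0 < eps &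
    forall r, r \in [seq f t | t <- enum T] -> 0 < r -> eps < r.
  by exists eps => // t; apply: Heps; rewrite map_f ?mem_enum.
elim: (map _ _) => [|r s [eps eps0 Heps]]; first by exists 1.
have [r_le0|r_gt0] := lerP r 0.
  by exists eps => // r'; rewrite inE => /orP[/eqP->|/Heps//]; lra.
have [eps_lt_r|r_le_eps] := ltrP eps r.
  by exists eps => // r'; rewrite inE => /orP[/eqP->|/Heps//].
exists (r / 2); first lra.
by move=> r'; rewrite inE => /orP[/eqP-> _|/Heps H /H]; lra.
Qed.

Section TypeGraph.
Variables (R : realType) (d n : nat) (V : 'I_n -> 'rV[R]_(d.+1)).
Implicit Types x y : 'rV[R]_(d.+1).

Lemma mem_ttype x m l :
  (l \in ttype V x m) = [forall i, V l 0 m - x 0 m <= V l 0 i - x 0 i].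
Proof. by rewrite ffunE inE. Qed.

Lemma ttype_tequiv x y : tequiv x y -> ttype V x = ttype V y.
Proof.
move=> [c xy]; apply/ffunP => m; apply/setP => l; rewrite !mem_ttype.
by apply: eq_forallb => i; rewrite !xy; apply/idP/idP; lra.
Qed.

Definition type_rel x : rel 'I_(d.+1) :=
  fun i m => [exists l, (l \in ttype V x i) && (l \in ttype V x m)].

Definition type_connected x := forall i m, connect (type_rel x) i m.

Lemma type_rel_sym x : symmetric (type_rel x).
Proof. by move=> i m; apply: eq_existsb => l; rewrite andbC. Qed.

Lemma connect_type_rel_sym x : connect_sym (type_rel x).
Proof. exact/sym_connect_sym/type_rel_sym. Qed.

Lemma tequiv_of_ttype x y : type_connected x -> ttype V y = ttype V x -> tequiv y x.
Proof.
move=> cx Tyx.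
have step i m : type_rel x i m -> y 0 i - x 0 i = y 0 m - x 0 m.
  case/existsP => l /andP[li lm].
  have li' : l \in ttype V y i by rewrite Tyx.
  have lm' : l \in ttype V y m by rewrite Tyx.
  move: li lm li' lm'; rewrite !mem_ttype.
  move=> /forallP/(_ m) ? /forallP/(_ i) ? /forallP/(_ m) ? /forallP/(_ i) ?; lra.
have cl : closed (type_rel x) [pred i | y 0 i - x 0 i == y 0 ord0 - x 0 ord0].
  by apply: (intro_closed (connect_type_rel_sym x)) => i m /step; rewrite !inE => ->.
exists (y 0 ord0 - x 0 ord0) => j.
by have := closed_connect cl (cx ord0 j); rewrite !inE eqxx => /esym/eqP; lra.
Qed.

(* Raising [x] by a small [e] on a union [C] of components keeps every
   minimum that is attained, and creates no new one. *)
Lemma ttype_shift x (C : {pred 'I_(d.+1)}) : closed (type_rel x) C ->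
  exists2 e, 0 < e & ttype V (\row_j (x 0 j + (if j \in C then e else 0))) = ttype V x.
Proof.
move=> clC.
pose gap (p : 'I_n * 'I_(d.+1) * 'I_(d.+1)) :=
  (V p.1.1 0 p.2 - x 0 p.2) - (V p.1.1 0 p.1.2 - x 0 p.1.2).
have [e e0 He] := exists_pos_lt_pos gap.
exists e => //; apply/ffunP => k; apply/setP => l; rewrite !mem_ttype.
apply/forallP/forallP => H i; have Hi := H i; rewrite !mxE in Hi *.
  have [//|lt] := leP (V l 0 k - x 0 k) (V l 0 i - x 0 i).
  have := He (l, i, k); rewrite /gap /=.
  by case: (k \in C) Hi; case: (i \in C); lra.
have [lt|eq] := ltP (V l 0 k - x 0 k) (V l 0 i - x 0 i).
  have := He (l, k, i); rewrite /gap /=.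
  by case: (k \in C); case: (i \in C); lra.
have ki : type_rel x k i.
  apply/existsP; exists l; rewrite !mem_ttype; apply/andP; split; apply/forallP => //.
  by move=> j; have := H j; lra.
by rewrite (clC _ _ ki); case: (i \in C); lra.
Qed.

Lemma type_connected_of_pseudovertex x : pseudovertex V x -> type_connected x.
Proof.
move=> pv i m; have [e e0 Hy] := ttype_shift (connect_closed (connect_type_rel_sym x) i).
have [c Hc] := pv _ Hy; apply: contraT => nim.
by have := Hc i; have := Hc m; rewrite !mxE !inE connect0 (negbTE nim); lra.
Qed.

Lemma pseudovertexP x : pseudovertex V x <-> type_connected x.
Proof.
split; first exact: type_connected_of_pseudovertex.
by move=> cx y; apply: tequiv_of_ttype.
Qed.

Lemma pseudovertex_tequiv x y : tequiv x y -> pseudovertex V x <-> pseudovertex V y.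
Proof.
by move=> xy; rewrite !pseudovertexP /type_connected /type_rel (ttype_tequiv xy).
Qed.

Lemma exists_mem_ttype x : (0 < d)%N -> type_connected x -> forall e, exists l, l \in ttype V x e.
Proof.
move=> d0 cx e.
have [m me] : exists m : 'I_(d.+1), m != e.
  exists (if e == ord0 then ord_max else ord0).
  have [->|] := eqVneq e ord0; last by rewrite eq_sym.
  by rewrite -val_eqE /= neq_ltn d0.
case/connectP: (cx e m) => -[/= _ me'|w p /= /andP[/existsP[l /andP[le _]] _] _].
  by rewrite me' eqxx in me.
by exists l.
Qed.

End TypeGraph.

Section SupportGenerators.
Variables (R : realType) (d n : nat) (B : 'I_n -> {set 'I_(d.+1)}).
Hypothesis B_neq0 : forall l, B l != set0.
Local Notation V := (fun l => - eJ R (B l)).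
Implicit Types J : {set 'I_(d.+1)}.

Lemma mem_ttype_eJ J m l : (l \in ttype V (- eJ R J) m) =
  if B l \subset J then (m \in B l) || (m \notin J) else (m \in B l) && (m \notin J).
Proof.
have /set0Pn[i0 i0B] := B_neq0 l; rewrite mem_ttype.
case: ifP => [BJ|/negbT/subsetPn[i1 i1B i1J]].
  have i0J := subsetP BJ i0 i0B.
  apply/forallP/idP => [/(_ i0)|Hm i]; rewrite !mxE ?i0B ?i0J.
    by case: (m \in B l); case: (m \in J) => //=; lra.
  case: (boolP (i \in B l)) => [iB|_]; first rewrite (subsetP BJ i iB).
    by move: Hm; case: (m \in B l); case: (m \in J) => //=; lra.
  by move: Hm; case: (m \in B l); case: (m \in J); case: (i \in J) => //=; lra.
apply/forallP/idP => [/(_ i1)|/andP[mB mJ] i]; rewrite !mxE ?i1B ?(negbTE i1J).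
  by case: (m \in B l); case: (m \in J) => //=; lra.
by rewrite mB (negbTE mJ); case: (i \in B l); case: (i \in J) => //=; lra.
Qed.

Lemma mem_ttype0 m l : (l \in ttype V 0 m) = (m \in B l).
Proof.
have -> : ttype V 0 = ttype V (- eJ R set0).
  by apply: ttype_tequiv; exists 0 => i; rewrite !mxE inE oppr0 addr0.
by rewrite mem_ttype_eJ subset0 (negbTE (B_neq0 l)) inE andbT.
Qed.

Lemma ttype_eJ J : ttype V (- eJ R J) =
  [ffun j => if j \in J then ttype V 0 j :\: \bigcup_(i in ~: J) ttype V 0 i
             else ttype V 0 j :|: \bigcap_(i in ~: J) ~: ttype V 0 i].
Proof.
have out l : (l \in \bigcup_(i in ~: J) ttype V 0 i) = ~~ (B l \subset J).
  apply/bigcupP/subsetPn => -[i]; rewrite ?mem_ttype0 ?in_setC; first by exists i.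
  by move=> iB iJ; exists i; rewrite ?mem_ttype0 ?in_setC.
have inside l : (l \in \bigcap_(i in ~: J) ~: ttype V 0 i) = (B l \subset J).
  by rewrite -setC_bigcup inE out negbK.
apply/ffunP => j; rewrite [RHS]ffunE; apply/setP => l.
rewrite mem_ttype_eJ; case: (boolP (j \in J)) => _;
  rewrite ?in_setD ?in_setU ?out ?inside mem_ttype0;
  by case: (B l \subset J); rewrite ?andbT ?andbF ?orbT ?orbF.
Qed.

Lemma type_connected0 : (forall i m, exists l, i \in B l /\ m \in B l) ->
  type_connected V 0.
Proof.
move=> cover i m; have [l [il ml]] := cover i m.
by apply/connect1/existsP; exists l; rewrite !mem_ttype0 il ml.
Qed.

(* Every coordinate is adjacent to a coordinate [j0] outside [J]. *)
Lemma type_connected_eJ J j0 l0 : j0 \notin J -> B l0 \subset J ->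
  J \subset \bigcup_(l | B l \subset J) B l -> type_connected V (- eJ R J).
Proof.
move=> j0J l0J Jcov.
suff to_j0 i : type_rel V (- eJ R J) i j0.
  move=> i m; apply: connect_trans (connect1 (to_j0 i)) _.
  by rewrite connect_type_rel_sym connect1.
apply/existsP; case: (boolP (i \in J)) => iJ.
  have /bigcupP[l lJ il] := subsetP Jcov i iJ.
  by exists l; rewrite !mem_ttype_eJ lJ il j0J orbT.
by exists l0; rewrite !mem_ttype_eJ l0J iJ j0J !orbT.
Qed.

Lemma eJ_of_type_connected x : (0 < d)%N -> type_connected V x ->
  exists J, [/\ J != setT, tequiv x (- eJ R J) & J \subset \bigcup_(l | B l \subset J) B l].
Proof.
move=> d0 cx; have cover := exists_mem_ttype d0 cx.
have [imax _ Hmax] := @arg_maxP _ _ 'I_(d.+1) ord0 xpredT (fun i => x 0 i) isT.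
have low e : x 0 imax - 1 <= x 0 e.
  have [l] := cover e; rewrite mem_ttype => /forallP/(_ imax).
  by rewrite !mxE; case: (e \in B l); case: (imax \in B l); lra.
have two i : (x 0 i == x 0 imax) || (x 0 i == x 0 imax - 1).
  have cl : closed (type_rel V x) [pred i | (x 0 i == x 0 imax) || (x 0 i == x 0 imax - 1)].
    apply: (intro_closed (connect_type_rel_sym V x)) => a b /existsP[l /andP[]].
    rewrite !mem_ttype !inE => /forallP/(_ b) ab /forallP/(_ a) ba xa.
    have := low b; have := Hmax b isT; move: ab ba; rewrite !mxE.
    case/orP: xa => /eqP xa; case: (a \in B l); case: (b \in B l) => /= *;
      first [apply/orP; left; apply/eqP; lra | apply/orP; right; apply/eqP; lra | lra].
  by have := closed_connect cl (cx imax i); rewrite !inE eqxx => <-.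
exists [set i | x 0 i != x 0 imax]; split.
- by apply/eqP => /setP/(_ imax); rewrite !inE eqxx.
- exists (x 0 imax) => i; rewrite !mxE inE.
  by case: eqVneq (two i) => [->|_ /eqP->] /=; lra.
apply/subsetP => e; rewrite inE => eM.
have xe : x 0 e = x 0 imax - 1 by move: (two e); rewrite (negbTE eM) => /eqP.
have [l] := cover e; rewrite mem_ttype => /forallP le.
apply/bigcupP; exists l.
  apply/subsetP => i iB; rewrite inE; apply/eqP => xi.
  by have := le i; rewrite !mxE xe xi iB; case: (e \in B l); lra.
by have := le imax; rewrite !mxE xe; case: (e \in B l) => //; case: (imax \in B l); lra.
Qed.

Lemma pseudovertexE : (0 < d)%N -> (forall i m, exists l, i \in B l /\ m \in B l) ->
  forall x, pseudovertex V x <-> exists I : {set 'I_n}, tequiv x (- eJ R (\bigcup_(l in I) B l)).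
Proof.
move=> d0 cover x; split.
  move=> /pseudovertexP/(eJ_of_type_connected d0)[J [_ xJ Jcov]].
  exists [set l | B l \subset J]; suff -> : \bigcup_(l in [set l | B l \subset J]) B l = J by [].
  apply/setP => e; apply/bigcupP/idP => [[l]|eJ]; first by rewrite inE => /subsetP; apply.
  by have /bigcupP[l lJ el] := subsetP Jcov e eJ; exists l; rewrite ?inE.
case=> I /pseudovertex_tequiv ->; set J := \bigcup_(l in I) B l.
have BJ l : l \in I -> B l \subset J by move=> lI; apply: bigcup_sup.
have pv0 : tequiv 0 (- eJ R J) -> pseudovertex V (- eJ R J).
  by move=> E; apply/(pseudovertex_tequiv V E)/pseudovertexP/type_connected0.
have [J0|/set0Pn[j1 /bigcupP[l1 /BJ l1J _]]] := eqVneq J set0.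
  by apply: pv0; exists 0 => i; rewrite J0 !mxE inE oppr0 addr0.
have [JT|] := eqVneq J setT.
  by apply: pv0; exists 1 => i; rewrite JT !mxE inE addNr.
rewrite -subTset => /subsetPn[j0 _ j0J]; apply/pseudovertexP.
apply: type_connected_eJ j0J l1J _; apply/subsetP => e /bigcupP[l lI el].
by apply/bigcupP; exists l; first exact: BJ.
Qed.

End SupportGenerators.

Section UnitGenerators.
Variables (R : realType) (d : nat).
Local Notation V := (fun i : 'I_(d.+1) => - eJ R [set i]).
Implicit Types J : {set 'I_(d.+1)}.

Let unit_neq0 (i : 'I_(d.+1)) : [set i] != set0.
Proof. by apply/set0Pn; exists i; rewrite inE. Qed.

Lemma not_type_connected_unit0 : (0 < d)%N -> ~ type_connected V 0.
Proof.
move=> d0 /(_ ord0 ord_max) c0.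
have cl : closed (type_rel V 0) (pred1 ord0).
  apply: (intro_closed (connect_type_rel_sym V 0)) => a b /existsP[l /andP[]].
  by rewrite !(mem_ttype0 R unit_neq0) !inE => /eqP-> /eqP->.
have := closed_connect cl c0; rewrite !inE eqxx -val_eqE /= => /esym/eqP d_eq0.
by rewrite d_eq0 in d0.
Qed.

Lemma pseudovertex_unitE : (0 < d)%N -> forall x,
  pseudovertex V x <-> exists J, (1 <= #|J| <= d)%N /\ tequiv x (- eJ R J).
Proof.
move=> d0 x; split => [pvx|[J [/andP[J_gt0 J_le] xJ]]].
  have /pseudovertexP/(eJ_of_type_connected d0)[J [JT xJ _]] := pvx.
  exists J; split => //; apply/andP; split; last first.
    by have := proper_card (etrans (properT J) JT); rewrite cardsT card_ord.
  rewrite card_gt0; apply: contra_notN (not_type_connected_unit0 d0) => /eqP J0.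
  have [c xc] := xJ; apply/pseudovertexP/(pseudovertex_tequiv V (_ : tequiv x 0)) => //.
  by exists c => i; rewrite xc J0 !mxE inE oppr0 add0r.
apply/(pseudovertex_tequiv V xJ)/pseudovertexP.
have [j1 j1J] := card_gt0P J_gt0.
have /subsetPn[j0 _ j0J] : ~~ ([set: 'I_(d.+1)] \subset J).
  by rewrite subTset; apply: contraTneq J_le => ->; rewrite cardsT card_ord ltnn.
apply: (type_connected_eJ R unit_neq0 j0J (_ : [set j1] \subset J)); first by rewrite sub1set.
by apply/subsetP => e eJ; apply/bigcupP; exists e; rewrite ?sub1set ?inE.
Qed.

End UnitGenerators.

Theorem mainTheorem7 (R : realType) (Vt : finType) (d : nat)
  (src tgt : 'I_(d.+1) -> Vt) (n : nat) (B : 'I_n -> {set 'I_(d.+1)}) :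
  simple_graph src tgt ->
  connected_graph src tgt ->
  bridgeless src tgt ->
  injective B ->
  (forall F, spanning_tree src tgt F <-> exists i, B i = F) ->
  let V : 'I_n -> 'rV[R]_(d.+1) := fun l => - eJ R (B l) in
  (* (1) *)
  (forall x : 'rV[R]_(d.+1),
     pseudovertex V x <->
     exists I : {set 'I_n}, tequiv x (- eJ R (\bigcup_(i in I) B i))) /\
  (* (2) *)
  (forall x : 'rV[R]_(d.+1),
     pseudovertex (fun i : 'I_(d.+1) => - eJ R [set i]) x <->
     exists J : {set 'I_(d.+1)},
       (1 <= #|J| <= d)%N /\ tequiv x (- eJ R J)) /\
  (* (3) *)
  (forall J : {set 'I_(d.+1)},
     pseudovertex V (- eJ R J) ->
     let T0 := ttype V 0 in
     ttype V (- eJ R J) =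
       [ffun j => if j \in J then T0 j :\: \bigcup_(i in ~: J) T0 i
                  else T0 j :|: \bigcap_(i in ~: J) ~: T0 i]).
Proof.
move=> simpleG connG bridgelessG _ treesB V.
have d_gt0 := bridgeless_gt0 simpleG bridgelessG.
have B_neq0 l : B l != set0 by apply: (spanning_tree_neq0 simpleG); apply/treesB; exists l.
have B_cover i m : exists l, i \in B l /\ m \in B l.
  have [F [iF mF /treesB[l Bl]]] := spanning_tree_pair simpleG i m connG.
  by exists l; rewrite Bl.
split; first exact: pseudovertexE B_neq0 d_gt0 B_cover.
split; first exact: pseudovertex_unitE d_gt0.
by move=> J _; apply: ttype_eJ.
Qed.
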